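(* Let $G$ be a finite group, $f\in\mathrm{Aut}(G)$, and $\Lambda$ a subgroup of $\mathrm{Fix}(G,f)=\{x\in G: f(x)=x\}$. Then there is a function $\phi:\mathscr{H}(G,\Lambda,f)\times\mathscr{H}(G,\Lambda,f)\to\Lambda$ such that $\Lambda\times_\phi\mathscr{H}(G,\Lambda,f)$ is a quandle and $$\mathrm{GAlex}(G,f)\cong\Lambda\times_\phi\mathscr{H}(G,\Lambda,f),$$ and the projection $\pi:\Lambda\times_\phi\mathscr{H}(G,\Lambda,f)\to\mathscr{H}(G,\Lambda,f)$, $(\lambda,\Lambda g)\mapsto\Lambda g$, is equivalent to $p_\Lambda:\mathrm{GAlex}(G,f)\to\mathscr{H}(G,\Lambda,f)$, $p_\Lambda(g)=\Lambda g$. Moreover, if $\Lambda=\mathrm{Fix}(G,f)$, then $\pi$ is equivalent to $\mathrm{inn}:\mathrm{GAlex}(G,f)\to\mathrm{inn}(\mathrm{GAlex}(G,f))$.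
   Context: A quandle is a set with operation $*$ satisfying $a*a=a$; unique right division; $(a*b)*c=(a*c)*(b*c)$. $R_a(y)=y*a$; $\mathrm{inn}(a)=R_a$, and $\mathrm{inn}(Q)=\{R_a\}$ is a quandle with $R_a*R_b=R_{a*b}$. $\mathrm{GAlex}(G,f)$ is the quandle on $G$ with $a*b=f(ab^{-1})b$. For a subgroup $H\le\mathrm{Fix}(G,f)$, $\mathscr{H}(G,H,f)$ is the quandle on the right cosets $\{Hg\}$ with $Ha*Hb=Hf(ab^{-1})b$. For a quandle $X$ and a (not necessarily abelian) group $\Lambda$, and a function $\phi:X\times X\to\Lambda$, $\Lambda\times_\phi X$ denotes $\Lambda\times X$ with $(\lambda,a)*(\mu,b)=(\lambda\phi(a,b),a*b)$ (when this is a quandle). Homomorphisms $f_1:A\to B$, $f_2:C\to D$ are equivalent if there are isomorphisms $i:A\to C$, $j:B\to D$ with $j f_1=f_2 i$. *)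

From HB Require Import structures.
From mathcomp Require Import all_boot all_order all_fingroup.
Set Implicit Arguments. Unset Strict Implicit. Unset Printing Implicit Defensive.
Local Open Scope group_scope.

Definition is_quandle (X : Type) (op : X -> X -> X) : Prop :=
  [/\ (forall a, op a a = a),
      (forall b, bijective (fun y => op y b))
    & (forall a b c, op (op a b) c = op (op a c) (op b c))].

Definition qiso (A C : Type) (opA : A -> A -> A) (opC : C -> C -> C) (i : A -> C) : Prop :=
  bijective i /\ forall x y, i (opA x y) = opC (i x) (i y).

Definition hom_equiv (A B C D : Type) (opA : A -> A -> A) (opB : B -> B -> B)
  (opC : C -> C -> C) (opD : D -> D -> D) (f1 : A -> B) (f2 : C -> D) : Prop :=
  exists (i : A -> C) (j : B -> D),
    [/\ qiso opA opC i, qiso opB opD j & forall x, j (f1 x) = f2 (i x)].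

Definition galex_op (gT : finGroupType) (f : gT -> gT) (a b : gT) : gT :=
  f (a * b^-1) * b.

Definition Fix (gT : finGroupType) (f : gT -> gT) : {set gT} := [set x | f x == x].

Definition Hcar (gT : finGroupType) (L : {set gT}) :=
  {A : {set gT} | A \in rcosets L [set: gT]}.

Lemma rcoset_in_rcosets (gT : finGroupType) (L : {set gT}) (x : gT) :
  L :* x \in rcosets L [set: gT].
Proof. by rewrite -rcosetE /rcosets imset_f ?in_setT. Qed.

Definition pcos (gT : finGroupType) (L : {set gT}) (g : gT) : Hcar L :=
  exist _ (L :* g) (rcoset_in_rcosets L g).

Definition Hop (gT : finGroupType) (f : gT -> gT) (L : {set gT}) (A B : Hcar L) : Hcar L :=
  pcos L (galex_op f (repr (val A)) (repr (val B))).

Definition ext_op (Lam : finGroupType) (X : Type) (opX : X -> X -> X)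
  (phi : X -> X -> Lam) (p q : Lam * X) : Lam * X :=
  (p.1 * phi p.2 q.2, opX p.2 q.2).

(* ---------- inn(Q) = {R_a} with R_a * R_b = R_{a*b} ---------- *)
Definition Rff (X : finType) (op : X -> X -> X) (a : X) : {ffun X -> X} :=
  [ffun y => op y a].

Definition inn_car (X : finType) (op : X -> X -> X) :=
  {g : {ffun X -> X} | g \in codom (Rff op)}.

Definition inn (X : finType) (op : X -> X -> X) (a : X) : inn_car op :=
  exist _ (Rff op a) (codom_f (Rff op) a).

Definition inn_op (X : finType) (op : X -> X -> X) (g h : inn_car op) : inn_car op :=
  inn op (op (iinv (valP g)) (iinv (valP h))).

Arguments Hop {gT} f L A B.
Arguments pcos {gT} L g.
Arguments inn {X} op a.
Arguments inn_op {X} op g h.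
Arguments ext_op {Lam X} opX phi p q.
Arguments galex_op {gT} f a b.

From mathcomp Require Import all_boot all_order all_fingroup.
Set Implicit Arguments. Unset Strict Implicit. Unset Printing Implicit Defensive.
Local Open Scope group_scope.

(* Choosing a representative [sec A] of every right coset [A] of [L] writes each
   g uniquely as [l * sec A] with [l] in [L] and [A = L g].  Since [f] fixes [L],
   [(l a) * (m b) = f(l a b^-1 m^-1) m b = l (a * b)] in GAlex(G, f), so in these
   coordinates the operation is [(l, A) * (m, B) = (l phi(A, B), A * B)] with
   [phi(A, B) = (sec A * sec B) (sec (A * B))^-1].  For the last claim,
   [R_a = R_b] holds in GAlex(G, f) exactly when [a b^-1] is fixed by [f], so the
   fibres of [inn] are the right cosets of Fix(G, f). *)

Lemma quandle_qiso A C (opA : A -> A -> A) (opC : C -> C -> C) (i : A -> C) :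
  qiso opA opC i -> is_quandle opA -> is_quandle opC.
Proof.
case=> [[j ij ji] iM] [idem rdiv dist].
have opCE x y : opC x y = i (opA (j x) (j y)) by rewrite iM !ji.
split.
- by move=> a; rewrite opCE idem ji.
- move=> b; case: (rdiv (j b)) => g gK Kg.
  by exists (fun z => i (g (j z))) => z /=; rewrite opCE ij ?gK ?Kg ji.
- by move=> a b c; rewrite !opCE !ij dist.
Qed.

Lemma can_qiso A C (opA : A -> A -> A) (opC : C -> C -> C) (i : A -> C) (k : C -> A) :
  cancel i k -> cancel k i -> {morph k : x y / opC x y >-> opA x y} ->
  qiso opA opC i.
Proof.
move=> ik ki kM; split; first by exists k.
by move=> x y; apply: (can_inj ki); rewrite ik kM !ik.
Qed.

Lemma qiso_id A (op : A -> A -> A) : qiso op op id.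
Proof. by split=> //; exists id. Qed.

Section InnerMaps.
Variables (X : finType) (op : X -> X -> X).
Hypothesis opQ : is_quandle op.

(* [R_(a * b) = R_b R_a R_b^-1], so [R_(a * b)] only depends on [R_a] and [R_b]. *)
Lemma Rff_op a a' b b' : Rff op a' = Rff op a -> Rff op b' = Rff op b ->
  Rff op (op a' b') = Rff op (op a b).
Proof.
move=> /ffunP ea /ffunP eb; apply/ffunP => y; rewrite !ffunE.
case: opQ => _ /(_ b) [g _ gK] dist; set z := g y.
have ebz := eb z; have eaz := ea z; have ebza := eb (op z a).
rewrite !ffunE in ebz eaz ebza.
by rewrite -(gK y) -/z -{1}ebz -!dist eaz ebza.
Qed.

Lemma inn_iinv (g : inn_car op) : inn op (iinv (valP g)) = g.
Proof. by apply: val_inj; rewrite /= f_iinv. Qed.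

Lemma inn_opE a b : inn_op op (inn op a) (inn op b) = inn op (op a b).
Proof. by apply: val_inj; apply: Rff_op; rewrite f_iinv. Qed.

End InnerMaps.

Section GAlex.
Variables (gT : finGroupType) (f : {perm gT}).
Hypothesis fM : {morph f : x y / x * y}.

Local Notation gop := (galex_op f).

Lemma fmorph1 : f 1 = 1.
Proof. by apply: (mulgI (f 1)); rewrite -fM !mulg1. Qed.

Lemma fmorphV x : f x^-1 = (f x)^-1.
Proof. by apply: (mulgI (f x)); rewrite -fM !mulgV fmorph1. Qed.

Lemma galex_quandle : is_quandle gop.
Proof.
rewrite /galex_op; split.
- by move=> a; rewrite mulgV fmorph1 mul1g.
- move=> b; exists (fun z => f^-1%g (z * b^-1) * b) => z.
  + by rewrite mulgK permK mulgKV.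
  + by rewrite mulgK permKV mulgKV.
- move=> a b c.
  have -> : f (a * c^-1) * c * (f (b * c^-1) * c)^-1 = f (a * b^-1).
    by rewrite invMg mulgA mulgK -fmorphV invMg invgK -fM mulgA mulgKV.
  by rewrite -(mulgA (f (a * b^-1))) [f (_ * (b * c^-1))]fM mulgA.
Qed.

Lemma galex_mul_Fix l m a b : l \in Fix f -> m \in Fix f ->
  gop (l * a) (m * b) = l * gop a b.
Proof.
rewrite !inE => /eqP fl /eqP fm.
by rewrite /galex_op invMg !mulgA !fM !fmorphV fl fm mulgKV !mulgA.
Qed.

Lemma inn_galex_eq a b : inn gop a = inn gop b <-> a * b^-1 \in Fix f.
Proof.
split=> [/(congr1 val)/ffunP/(_ a) | ].
  rewrite !ffunE /galex_op mulgV fmorph1 mul1g inE => ea.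
  by apply/eqP; apply: (mulIg b); rewrite -ea mulgKV.
rewrite inE => /eqP fab; apply: val_inj; apply/ffunP => y; rewrite !ffunE.
rewrite /galex_op -{1}(mulgKV b a) invMg mulgA [f (_ * (a * b^-1)^-1)]fM.
by rewrite fmorphV fab -mulgA invMg invgK mulgKV.
Qed.

End GAlex.

Section Cosets.
Variables (gT : finGroupType) (L : {group gT}).

Definition sec (A : Hcar L) : gT := repr (val A).

Lemma pcos_sec A : pcos L (sec A) = A.
Proof.
apply: val_inj; rewrite /= /sec; case: A => A /= /rcosetsP [x _ ->].
by apply/rcoset_eqP; exact: mem_repr_rcoset.
Qed.

Lemma pcosMl l x : l \in L -> pcos L (l * x) = pcos L x.
Proof.
by move=> Ll; apply: val_inj; apply/rcoset_eqP; rewrite mem_rcoset mulgK.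
Qed.

Lemma mulV_sec_pcos x : x * (sec (pcos L x))^-1 \in L.
Proof. by rewrite -groupV invMg invgK -mem_rcoset; exact: mem_repr_rcoset. Qed.

Definition coord (g : gT) : subg_of L * Hcar L :=
  (subg L (g * (sec (pcos L g))^-1), pcos L g).

Definition uncoord (p : subg_of L * Hcar L) : gT := sgval p.1 * sec p.2.

Lemma coordK : cancel coord uncoord.
Proof. by move=> g; rewrite /uncoord /= subgK ?mulV_sec_pcos // mulgKV. Qed.

Lemma pcos_uncoord p : pcos L (uncoord p) = p.2.
Proof. by rewrite pcosMl ?subgP // pcos_sec. Qed.

Lemma uncoordK : cancel uncoord coord.
Proof.
by case=> l A; rewrite /coord pcos_uncoord /uncoord /= mulgK sgvalK.
Qed.

End Cosets.

Section Extension.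
Variables (gT : finGroupType) (f : {perm gT}) (L : {group gT}).
Hypothesis fM : {morph f : x y / x * y}.
Hypothesis sLFix : L \subset Fix f.

Local Notation gop := (galex_op f).

Definition cocycle (A B : Hcar L) : subg_of L :=
  subg L (gop (sec A) (sec B) * (sec (Hop f L A B))^-1).

Lemma uncoord_morph :
  {morph @uncoord gT L : p q / ext_op (Hop f L) cocycle p q >-> gop p q}.
Proof.
case=> l A [m B]; rewrite /uncoord /= subgK ?mulV_sec_pcos // -mulgA mulgKV.
by rewrite galex_mul_Fix // (subsetP sLFix) ?subgP.
Qed.

Lemma qiso_coord : qiso gop (ext_op (Hop f L) cocycle) (@coord gT L).
Proof. exact: can_qiso (@coordK gT L) (@uncoordK gT L) uncoord_morph. Qed.

Lemma qiso_uncoord : qiso (ext_op (Hop f L) cocycle) gop (@uncoord gT L).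
Proof. exact: can_qiso (@uncoordK gT L) (@coordK gT L) qiso_coord.2. Qed.

Lemma inn_sec x : inn gop (sec (pcos L x)) = inn gop x.
Proof.
apply/(inn_galex_eq fM); apply: (subsetP sLFix).
by rewrite -groupV invMg invgK mulV_sec_pcos.
Qed.

Definition coset_inn (A : Hcar L) : inn_car gop := inn gop (sec A).

Lemma qiso_coset_inn : L :=: Fix f -> qiso (Hop f L) (inn_op gop) coset_inn.
Proof.
move=> LFix; split.
  exists (fun g => pcos L (iinv (valP g))) => [A | g]; last first.
    by rewrite /coset_inn inn_sec inn_iinv.
  have : inn gop (iinv (valP (coset_inn A))) = inn gop (sec A) by rewrite inn_iinv.
  move/(inn_galex_eq fM); rewrite -LFix => Ll.
  by rewrite -(mulgKV (sec A) (iinv _)) pcosMl ?pcos_sec.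
move=> A B; rewrite /coset_inn (inn_opE (galex_quandle fM)).
by rewrite -[Hop f L A B]/(pcos L (gop (sec A) (sec B))) inn_sec.
Qed.

End Extension.

Theorem mainTheorem9 (gT : finGroupType) (f : {perm gT}) (L : {group gT}) :
  f \in Aut [set: gT] -> L \subset Fix f ->
  exists phi : Hcar L -> Hcar L -> subg_of L,
    [/\ is_quandle (ext_op (Hop f L) phi),
        (exists i : gT -> subg_of L * Hcar L,
            qiso (galex_op f) (ext_op (Hop f L) phi) i),
        hom_equiv (ext_op (Hop f L) phi) (Hop f L) (galex_op f) (Hop f L)
                  snd (pcos L)
      & (L :=: Fix f ->
         hom_equiv (ext_op (Hop f L) phi) (Hop f L)
                   (galex_op f) (inn_op (galex_op f))
                   snd (inn (galex_op f)))].
Proof.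
move=> fAut sLFix.
have fM : {morph f : x y / x * y}.
  by move=> x y; apply: (morphicP (Aut_morphic fAut)); rewrite inE.
exists (@cocycle gT f L); split.
- exact: quandle_qiso (qiso_coord fM sLFix) (galex_quandle fM).
- by exists (@coord gT L); exact: qiso_coord.
- exists (@uncoord gT L), id; split=> [||p]; last by rewrite pcos_uncoord.
  + exact: qiso_uncoord.
  + exact: qiso_id.
- move=> LFix; exists (@uncoord gT L), (@coset_inn gT f L); split=> [||[l A]].
  + exact: qiso_uncoord.
  + exact: qiso_coset_inn.
  + apply/esym/(inn_galex_eq fM); rewrite /uncoord /= mulgK -LFix; exact: subgP.
Qed.
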